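(* Let $a,b,c,d$ be positive integers and let $G=K_{a,b,c,d}$ be the complete 4-partite graph with partite sets of sizes $a,b,c,d$. Then $\mathrm{ppn}(G)=1$ if and only if $a=b=c=d=1$.
   Context: A $k$-prime product distance labeling of a finite graph $G$ (for a positive integer $k$) is an injective map $L:V(G)\to\mathbb{Z}$ such that $|L(u)-L(v)|>1$ for all distinct vertices $u,v$ of $G$, and such that for every pair of adjacent vertices $u,v$ the integer $|L(u)-L(v)|$ has at most $k$ prime factors counted with multiplicity. The prime product number $\mathrm{ppn}(G)$ is the least positive integer $k$ such that $G$ has a $k$-prime product distance labeling. *)

From HB Require Import structures.
From mathcomp Require Import all_boot all_order all_algebra.
Set Implicit Arguments. Unset Strict Implicit. Unset Printing Implicit Defensive.
Import Order.TTheory GRing.Theory Num.Theory.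

Definition bigOmega (n : nat) : nat := \sum_(p <- primes n) logn p n.

(* A finite simple graph: vertex finType T with adjacency relation adj
   (assumed symmetric and irreflexive by the constructions below). *)

Definition is_kppdl (T : finType) (adj : rel T) (k : nat) (L : T -> int) : Prop :=
  injective L /\
  (forall u v : T, u != v -> (1 < `|L u - L v|)%N) /\
  (forall u v : T, adj u v -> (bigOmega `|L u - L v| <= k)%N).

Definition has_kppdl (T : finType) (adj : rel T) (k : nat) : Prop :=
  exists L : T -> int, is_kppdl adj k L.

Definition ppn_is (T : finType) (adj : rel T) (k : nat) : Prop :=
  (0 < k)%N /\ has_kppdl adj k /\
  (forall j : nat, (0 < j)%N -> has_kppdl adj j -> (k <= j)%N).

Definition K4_vert (a b c d : nat) : finType := ((('I_a + 'I_b) + 'I_c) + 'I_d)%type.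

Definition K4_part (a b c d : nat) (v : K4_vert a b c d) : nat :=
  match v with
  | inl (inl (inl _)) => 0
  | inl (inl (inr _)) => 1
  | inl (inr _) => 2
  | inr _ => 3
  end.

Definition K4_adj (a b c d : nat) : rel (K4_vert a b c d) :=
  fun u v => K4_part u != K4_part v.

(* A prime distance labeling of K_{1,1,1,1} is given by 0, 2, 5, 7.  Conversely,
   if a part has two vertices, K_{a,b,c,d} contains K_{1,1,1,2}, i.e. a
   triangle x, y, z and two further vertices u, w adjacent to all of it.  In a
   triangle of prime distances two labels have the same parity, so two labels
   of the triangle are twins x, x + 2.  Every vertex adjacent to both twins is
   at odd distance from x, so the labels of z, u, w are pairwise at even, hence
   equal to 2, distance: u and w are z - 2 and z + 2.  Then the distances
   t - 4, t - 2, t, t + 2 (with t = z - x) are all odd primes, which is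
   impossible modulo 3. *)

From mathcomp Require Import all_boot all_order all_algebra zify.
Set Implicit Arguments. Unset Strict Implicit.
Import GRing.Theory Num.Theory.

Lemma bigOmega_prime p : prime p -> bigOmega p = 1%N.
Proof. by move=> p_pr; rewrite /bigOmega primes_prime // big_seq1 logn_prime // eqxx. Qed.

Lemma prime_bigOmega_le1 n : (1 < n)%N -> (bigOmega n <= 1)%N -> prime n.
Proof.
rewrite /bigOmega => n_gt1.
have n_gt0 : 0 < n by apply: ltnW.
have pdiv_n : pdiv n \in primes n by rewrite mem_primes pdiv_prime // n_gt0 pdiv_dvd.
have logn_gt0 p : p \in primes n -> 0 < logn p n by rewrite logn_gt0.
case En: (primes n) pdiv_n => [//|p [|q r]] _; rewrite !big_cons.
- have p_n : p \in primes n by rewrite En inE.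
  have p_nat : p.-nat n by rewrite /pnat n_gt0 En /= inE eqxx.
  rewrite big_nil addn0 => logn_le1.
  have logn1 : logn p n = 1 by have := logn_gt0 p p_n; lia.
  rewrite -(part_pnat_id p_nat) p_part logn1 expn1.
  by move: p_n; rewrite mem_primes => /and3P[].
- have := logn_gt0 p; have := logn_gt0 q; rewrite En !inE !eqxx ?orbT.
  lia.
Qed.

Local Open Scope ring_scope.

(* The consequences of the primality of |D| used below, in a form that lia handles. *)
Definition prime_like (D : int) : Prop :=
  [/\ (1 < `|D|)%N, `|D|%N = 2%N \/ ~~ (2 %| `|D|)%N
    & `|D|%N = 3%N \/ ~~ (3 %| `|D|)%N].

Lemma prime_like_prime (D : int) : prime `|D| -> prime_like D.
Proof.
move=> D_prime; split; first exact: prime_gt1.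
- have [/(prime_nt_dvdP D_prime (isT : 2 != 1)%N) <- | ] := boolP (2 %| `|D|)%N.
    by left.
  by right.
- have [/(prime_nt_dvdP D_prime (isT : 3 != 1)%N) <- | ] := boolP (3 %| `|D|)%N.
    by left.
  by right.
Qed.

Lemma prime_likeC (x y : int) : prime_like (x - y) -> prime_like (y - x).
Proof. by rewrite -opprB /prime_like abszN. Qed.

Lemma prime_like_triangle (x y z : int) :
  prime_like (y - x) -> prime_like (z - x) -> prime_like (z - y) ->
  `|y - x|%N = 2%N \/ `|z - x|%N = 2%N \/ `|z - y|%N = 2%N.
Proof. by move=> [_ + _] [_ + _] [_ + _]; lia. Qed.

Lemma prime_like_odd_twin (x z : int) :
  prime_like (z - x) -> prime_like (z - (x + 2)) -> ~~ (2 %| `|z - x|)%N.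
Proof. by move=> [_ + _] [_ + _]; lia. Qed.

Lemma prime_like_same_parity (x z u : int) :
  ~~ (2 %| `|z - x|)%N -> ~~ (2 %| `|u - x|)%N ->
  prime_like (u - z) -> u = z + 2 \/ u = z - 2.
Proof. by move=> ? ? [_ + _]; lia. Qed.

Lemma prime_like_odd_run4 (x z : int) : ~~ (2 %| `|z - x|)%N ->
  prime_like (z - 2 - (x + 2)) -> prime_like (z - (x + 2)) ->
  prime_like (z - x) -> prime_like (z + 2 - x) -> False.
Proof. by move=> ? [? _ +] [? _ +] [? _ +] [? _ +]; lia. Qed.

Lemma prime_like_no_K1112_twin (x z u w : int) : u != w ->
  prime_like (z - x) -> prime_like (z - (x + 2)) ->
  prime_like (u - x) -> prime_like (u - (x + 2)) -> prime_like (u - z) ->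
  prime_like (w - x) -> prime_like (w - (x + 2)) -> prime_like (w - z) -> False.
Proof.
move=> /eqP u_neq_w zx zx2 ux ux2 uz wx wx2 wz.
have z_odd := prime_like_odd_twin zx zx2.
have [|] := prime_like_same_parity z_odd (prime_like_odd_twin ux ux2) uz;
have [|] := prime_like_same_parity z_odd (prime_like_odd_twin wx wx2) wz;
  move=> Ew Eu; subst u w; try lia.
- exact: (prime_like_odd_run4 z_odd wx2 zx2 zx ux).
- exact: (prime_like_odd_run4 z_odd ux2 zx2 zx wx).
Qed.

Lemma prime_like_no_K1112_dist2 (x y z u w : int) : u != w -> `|y - x|%N = 2%N ->
  prime_like (z - x) -> prime_like (z - y) ->
  prime_like (u - x) -> prime_like (u - y) -> prime_like (u - z) ->
  prime_like (w - x) -> prime_like (w - y) -> prime_like (w - z) -> False.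
Proof.
move=> u_neq_w yx2; have [->|->] : y = x + 2 \/ x = y + 2 by lia.
  exact: prime_like_no_K1112_twin.
by move=> zy zx uy ux uz wy wx wz; apply: (prime_like_no_K1112_twin u_neq_w zx zy).
Qed.

Lemma prime_dist_no_K1112 (x y z u w : int) : u != w ->
  prime `|y - x| -> prime `|z - x| -> prime `|z - y| ->
  prime `|u - x| -> prime `|u - y| -> prime `|u - z| ->
  prime `|w - x| -> prime `|w - y| -> prime `|w - z| -> False.
Proof.
move=> u_neq_w /prime_like_prime yx /prime_like_prime zx /prime_like_prime zy.
move=> /prime_like_prime ux /prime_like_prime uy /prime_like_prime uz.
move=> /prime_like_prime wx /prime_like_prime wy /prime_like_prime wz.
have [yx2|[zx2|zy2]] := prime_like_triangle yx zx zy.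
- exact: (prime_like_no_K1112_dist2 u_neq_w yx2 zx zy).
- exact: (prime_like_no_K1112_dist2 u_neq_w zx2 yx (prime_likeC zy)).
- exact: (prime_like_no_K1112_dist2 u_neq_w zy2 (prime_likeC yx) (prime_likeC zx)).
Qed.

Lemma kppdl1_prime_dist (T : finType) (adj : rel T) (L : T -> int) (u v : T) :
  irreflexive adj -> is_kppdl adj 1 L -> adj u v -> prime `|L u - L v|.
Proof.
move=> adj_irr [_ [L_sep L_omega]] uv; apply: prime_bigOmega_le1; last exact: L_omega.
by apply: L_sep; apply: contraTneq uv => ->; rewrite adj_irr.
Qed.

Lemma kppdl1_no_K1112 (T : finType) (adj : rel T) (L : T -> int) (x y z u w : T) :
  irreflexive adj -> is_kppdl adj 1 L -> u != w ->
  adj y x -> adj z x -> adj z y -> adj u x -> adj u y -> adj u z ->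
  adj w x -> adj w y -> adj w z -> False.
Proof.
move=> adj_irr L_kppdl u_neq_w; have dist := kppdl1_prime_dist adj_irr L_kppdl.
move=> /dist yx /dist zx /dist zy /dist ux /dist uy /dist uz /dist wx /dist wy /dist wz.
apply: (prime_dist_no_K1112 _ yx zx zy ux uy uz wx wy wz).
by apply: contra u_neq_w => /eqP /L_kppdl.1 ->.
Qed.

Lemma K4_adj_irr a b c d : irreflexive (@K4_adj a b c d).
Proof. by move=> v; rewrite /K4_adj eqxx. Qed.

(* Consecutive labels differ by 2, 3, 2, and the others by 5, 5, 7. *)
Definition K4_label (v : K4_vert 1 1 1 1) : int := nth 0 [:: 0; 2; 5; 7] (K4_part v).

Lemma K4_label_kppdl1 : is_kppdl (@K4_adj 1 1 1 1) 1 K4_label.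
Proof.
split; [|split]; move=> u v; case: u => [[[i|i]|i]|i]; case: v => [[[j|j]|j]|j];
  rewrite /K4_label /K4_adj /= ?(ord1 i) ?(ord1 j) ?eqxx //.
all: try by move=> /eqP.
all: by move=> _; rewrite bigOmega_prime.
Qed.

Theorem mainTheorem8 (a b c d : nat) :
  (0 < a)%N -> (0 < b)%N -> (0 < c)%N -> (0 < d)%N ->
  (ppn_is (@K4_adj a b c d) 1 <-> [/\ a = 1%N, b = 1%N, c = 1%N & d = 1%N]).
Proof.
move=> a_gt0 b_gt0 c_gt0 d_gt0; split=> [[_ [[L L_kppdl] _]] | [-> -> -> ->]].
- have noK1112 := kppdl1_no_K1112 (@K4_adj_irr a b c d) L_kppdl.
  pose A i : K4_vert a b c d := inl (inl (inl i)).
  pose B i : K4_vert a b c d := inl (inl (inr i)).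
  pose C i : K4_vert a b c d := inl (inr i).
  pose D i : K4_vert a b c d := inr i.
  pose a0 := Ordinal a_gt0; pose b0 := Ordinal b_gt0.
  pose c0 := Ordinal c_gt0; pose d0 := Ordinal d_gt0.
  split; apply/eqP; rewrite eqn_leq ?a_gt0 ?b_gt0 ?c_gt0 ?d_gt0 andbT leqNgt;
    apply/negP => n_gt1.
  + exact: (noK1112 (B b0) (C c0) (D d0) (A a0) (A (Ordinal n_gt1))).
  + exact: (noK1112 (A a0) (C c0) (D d0) (B b0) (B (Ordinal n_gt1))).
  + exact: (noK1112 (A a0) (B b0) (D d0) (C c0) (C (Ordinal n_gt1))).
  + exact: (noK1112 (A a0) (B b0) (C c0) (D d0) (D (Ordinal n_gt1))).
- by split=> //; split=> [|j j_gt0 _ //]; exists K4_label; exact: K4_label_kppdl1.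
Qed.
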